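(* Let $M=(\mathcal{X},\mathcal{A},T,r,H,\rho)$, $\pi_e$, $\pi_b$, $K\ge1$, and $(\widetilde M,\widetilde\pi_e,\widetilde\pi_b)$ be as in the Replicator construction below. Then: (a) $\max_{l}\max_{\tilde x\in\widetilde{\mathcal{X}}_l,a}\frac{d_l^{\widetilde\pi_e}(\tilde x,a;\widetilde M)}{d_l^{\widetilde\pi_b}(\tilde x,a;\widetilde M)}\le 2\max_h\max_{x\in\mathcal{X}_h,a}\frac{d_h^{\pi_e}(x,a;M)}{d_h^{\pi_b}(x,a;M)}$; (b) the state-action value function of $\widetilde\pi_e$ in $\widetilde M$ is given, for $h\le H-1$, $x\in\mathcal{X}_h$, $k\in[K]$, $a\in\mathcal{A}$, by $Q^{\widetilde\pi_e}((x,k),a;\widetilde M)=Q^{\pi_e}_h(x,a;M)$ if $k=K$; $=Q^{\pi_e}_h(x,\pi_e(x);M)$ if $k<K$ and $a=\pi_e(x)$; $=\sum_{x'\in\mathcal{X}_h}d_h^{\pi_b}(x';M)Q_h^{\pi_e}(x',\pi_e(x');M)$ if $k<K$ and $a\ne\pi_e(x)$; and $Q^{\widetilde\pi_e}((x,1),a;\widetilde M)=Q_H^{\pi_e}(x,a;M)$ for $x\in\mathcal{X}_H$. In particular $V^{\widetilde\pi_e}(\widetilde\rho;\widetilde M)=V^{\pi_e}(\rho;M)$.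
   Context: $M$ is a layered finite-horizon MDP with state space $\mathcal{X}_1\cup\dots\cup\mathcal{X}_H$, action set $\mathcal{A}$ with $|\mathcal{A}|\ge2$, transition $T$, mean reward $r$, initial distribution $\rho\in\Delta(\mathcal{X}_1)$; $\pi_e$ is a deterministic evaluation policy and $\pi_b$ an offline policy; $d_h^\pi(x;M)=\Pr(x_h=x)$ and $d_h^\pi(x,a;M)=d_h^\pi(x;M)\pi(a|x)$; ratios with $0/0$ are ignored. Replicator construction with integer $K\ge1$: fix a deterministic $\pi_{\mathrm{other}}$ with $\pi_{\mathrm{other}}(x)\ne\pi_e(x)$ for all $x$. $\widetilde M$ has horizon $\widetilde H=(H-1)K+1$; its layer $l=(h-1)K+k$ ($h\in[H-1]$, $k\in[K]$) is $\{(x,k):x\in\mathcal{X}_h\}$, and its last layer $\widetilde H$ is $\{(x,1):x\in\mathcal{X}_H\}$; initial distribution $\widetilde\rho((x,1))=\rho(x)$. Transitions: for $h\le H-1$, $k\le K-1$, $x,x'\in\mathcal{X}_h$: $\widetilde T((x',k+1)|(x,k),a)=\mathbb{I}\{x'=x\}$ if $a=\pi_e(x)$ and $=d_h^{\pi_b}(x';M)$ otherwise; for $k=K$, $x\in\mathcal{X}_h$, $x'\in\mathcal{X}_{h+1}$: $\widetilde T((x',1)|(x,K),a)=T(x'|x,a)$. Rewards: $\widetilde r((x,k),a)=0$ if $x\in\mathcal{X}_h$ with $h\le H-1$ and $k<K$; $\widetilde r((x,K),a)=r(x,a)$ for $x\in\mathcal{X}_h$, $h\le H-1$; $\widetilde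 r((x,1),a)=r(x,a)$ for $x\in\mathcal{X}_H$. Policies: $\widetilde\pi_e((x,k))=\pi_e(x)$; $\widetilde\pi_b((x,k))=\pi_b(\cdot|x)$ if $k=K$ and $\widetilde\pi_b((x,k))=\frac12\delta_{\pi_e(x)}+\frac12\delta_{\pi_{\mathrm{other}}(x)}$ otherwise. *)

From mathcomp Require Import all_boot all_order all_algebra.
Set Implicit Arguments. Unset Strict Implicit. Unset Printing Implicit Defensive.
Import Order.TTheory GRing.Theory Num.Theory.
Local Open Scope ring_scope.

(* A finite-horizon MDP over a finite state type S, whose states are split
   into layers via [lay] (layer numbers 1..hor).  Transition kernel
   [tr x a x'] = T(x'|x,a), mean reward [rew], initial distribution [init]. *)
Record mdp (R : realFieldType) (S A : finType) := MDP {
  hor  : nat;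
  lay  : S -> nat;
  tr   : S -> A -> S -> R;
  rew  : S -> A -> R;
  init : S -> R }.

Section Gen.
Variables (R : realFieldType) (S A : finType).
Implicit Types (M : mdp R S A) (pi : S -> A -> R).

Definition is_layered_mdp M : Prop :=
  [/\ (0 < hor M)%N,
      (forall x, (1 <= lay M x <= hor M)%N),
      (forall x, 0 <= init M x) /\ \sum_x init M x = 1,
      (forall x, init M x != 0 -> lay M x = 1%N) &
      (forall x a, (lay M x < hor M)%N ->
         [/\ forall x', 0 <= tr M x a x',
             \sum_x' tr M x a x' = 1 &
             forall x', tr M x a x' != 0 -> lay M x' = (lay M x).+1])].

Definition is_policy pi : Prop :=
  forall x, (forall a, 0 <= pi x a) /\ \sum_a pi x a = 1.

Definition det_pol (p : S -> A) : S -> A -> R :=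
  fun x a => if a == p x then 1 else 0.

Definition occ_step M pi (d : S -> R) : S -> R :=
  fun x' => \sum_x \sum_a d x * pi x a * tr M x a x'.

(* d_h^pi(x;M) = Pr(x_h = x), h >= 1 (1-based time) *)
Definition occ M pi (h : nat) : S -> R := iter h.-1 (occ_step M pi) (init M).

Definition occSA M pi (h : nat) (x : S) (a : A) : R := occ M pi h x * pi x a.

(* Q-function with n remaining steps *)
Fixpoint Qrec M pi (n : nat) (x : S) (a : A) : R :=
  match n with
  | 0 => rew M x a
  | n'.+1 => rew M x a +
      \sum_x' tr M x a x' * \sum_a' pi x' a' * Qrec M pi n' x' a'
  end.

Definition Qfun M pi (h : nat) (x : S) (a : A) : R := Qrec M pi (hor M - h) x a.

Definition value M pi : R :=
  \sum_x init M x * \sum_a pi x a * Qfun M pi 1 x a.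

End Gen.
Arguments det_pol {R S A}.

(* The state (x,k), k in [K], is encoded as (x, k-1) with k-1 : 'I_K; the
   states of the last layer X_H only exist with k = 1. *)
Definition rep_state (S : finType) (K H : nat) (lay : S -> nat) :=
  {p : S * 'I_K | (lay p.1 < H)%N || (val p.2 == 0%N)}.

Section Rep.
Variables (R : realFieldType) (S A : finType) (M : mdp R S A) (K : nat).
Variables (pe : S -> A) (pb : S -> A -> R) (po : S -> A).

Definition RS : finType := rep_state K (hor M) (lay M).

Definition rx (p : RS) : S := (val p).1.
Definition rk (p : RS) : nat := val (val p).2.   (* = k - 1 *)

Definition rep_lay (p : RS) : nat := ((lay M (rx p)).-1 * K + rk p + 1)%N.

Definition rep_tr (p : RS) (a : A) (p' : RS) : R :=
  let x := rx p in let x' := rx p' in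
  if (lay M x < hor M)%N then
    if ((rk p).+1 < K)%N then
      (if (rk p' == (rk p).+1) && (lay M x' == lay M x) then
         (if a == pe x then (x' == x)%:R else occ M pb (lay M x) x')
       else 0)
    else (if rk p' == 0%N then tr M x a x' else 0)
  else 0.

Definition rep_rew (p : RS) (a : A) : R :=
  if ((rk p).+1 == K) || (lay M (rx p) == hor M) then rew M (rx p) a else 0.

Definition rep_init (p : RS) : R := if rk p == 0%N then init M (rx p) else 0.

Definition rep_mdp : mdp R RS A :=
  MDP ((hor M).-1 * K + 1)%N rep_lay rep_tr rep_rew rep_init.

Definition rep_pe (p : RS) : A := pe (rx p).

Definition rep_pb (p : RS) (a : A) : R :=
  if (rk p).+1 == K then pb (rx p) a
  else 2^-1 * det_pol pe (rx p) a + 2^-1 * det_pol po (rx p) a.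

End Rep.
Arguments rep_pe {R S A} M K pe.
Arguments rep_pb {R S A} M K pe pb po.

From mathcomp Require Import all_boot all_order all_algebra.
From mathcomp Require Import zify lra.
Import Order.TTheory GRing.Theory Num.Theory.
Set Implicit Arguments. Unset Strict Implicit. Unset Printing Implicit Defensive.
Local Open Scope ring_scope.

(* In the replicated MDP the copies k < K of layer h either keep the state
   (action pi_e(x)) or resample it from d_h^{pi_b}, and the last copy performs
   the transition of M.  Both kernels leave the layer-h occupancies of pi_e and
   of pi_b invariant (the latter because d_h^{pi_b} is a probability on X_h), so
   by induction along the layers of Mt the state (x,k) has the occupancy d_h(x)
   of M under both replicated policies.  The replicated behaviour policy plays
   pi_e(x) with probability 1/2 in the copies k < K, which costs the factor 2
   in the density ratio.  Backward induction on the remaining horizon computes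
   the Q-function: all rewards and genuine transitions sit in the last copies,
   and the other copies pass on Q_h(x, pi_e x) or its d_h^{pi_b}-average. *)

Section Generic.
Variables (R : realFieldType) (S A : finType).

Lemma sum_det_pol (p : S -> A) x (f : A -> R) :
  \sum_a det_pol p x a * f a = f (p x).
Proof.
rewrite (bigD1 (p x)) //= /det_pol eqxx mul1r big1 ?addr0 // => a /negbTE ->.
by rewrite mul0r.
Qed.

Lemma det_pol_policy (p : S -> A) : is_policy (@det_pol R _ _ p).
Proof.
move=> x; split=> [a|]; first by rewrite /det_pol; case: eqP.
by under eq_bigr do rewrite -[det_pol p x _]mulr1; rewrite sum_det_pol.
Qed.

Lemma big_if_mull (I : finType) (c : pred I) (D G : I -> R) :
  \sum_i (if c i then D i else 0) * G i = \sum_(i | c i) D i * G i.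
Proof.
by rewrite [RHS]big_mkcond; apply: eq_bigr => i _; case: (c i); rewrite ?mul0r.
Qed.

Lemma occS (M : mdp R S A) pi h :
  (0 < h)%N -> occ M pi h.+1 = occ_step M pi (occ M pi h).
Proof. by case: h => // h _; rewrite /occ /= iterS. Qed.

Lemma Qfun_succ (M : mdp R S A) pi h x a : (h < hor M)%N ->
  Qfun M pi h x a =
  rew M x a + \sum_x' tr M x a x' * \sum_a' pi x' a' * Qfun M pi h.+1 x' a'.
Proof. by move=> hH; rewrite /Qfun -subnSK. Qed.

Lemma eq_occ_step (M : mdp R S A) pi (d1 d2 : S -> R) :
  d1 =1 d2 -> occ_step M pi d1 =1 occ_step M pi d2.
Proof. by move=> e x'; apply: eq_bigr => x _; rewrite e. Qed.

End Generic.

Section Layered.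
Variables (R : realFieldType) (S A : finType) (M : mdp R S A).
Hypothesis HL : is_layered_mdp M.

Lemma lay_bounds x : (1 <= lay M x <= hor M)%N.
Proof. by case: HL => _ H _ _ _; apply: H. Qed.

Lemma init_ge0 x : 0 <= init M x.
Proof. by case: HL => _ _ [H _] _ _. Qed.

Lemma init_eq0 x : lay M x != 1%N -> init M x = 0.
Proof. by case: HL => _ _ _ H _ Hx; apply/eqP; apply: contraNT Hx => /H/eqP. Qed.

Lemma lay_tr x a x' :
  (lay M x < hor M)%N -> tr M x a x' != 0 -> lay M x' = (lay M x).+1.
Proof. by move=> xH; case: HL => _ _ _ _ /(_ x a xH)[_ _]; apply. Qed.

Lemma tr_ge0 x a x' : (lay M x < hor M)%N -> 0 <= tr M x a x'.
Proof. by move=> xH; case: HL => _ _ _ _ /(_ x a xH)[]. Qed.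

Lemma sum_tr x a : (lay M x < hor M)%N -> \sum_x' tr M x a x' = 1.
Proof. by move=> xH; case: HL => _ _ _ _ /(_ x a xH)[]. Qed.

Lemma occ_eq0 pi h x : (1 <= h <= hor M)%N -> lay M x != h -> occ M pi h x = 0.
Proof.
elim: h x => [//|[|h] IH] x /andP[_ hH] xh; first exact: init_eq0.
rewrite occS // /occ_step big1 // => y _; apply: big1 => a _.
have [yh|yh] := eqVneq (lay M y) h.+1; last by rewrite IH ?mul0r // (ltnW hH).
have [->|t0] := eqVneq (tr M y a x) 0; first by rewrite mulr0.
by move: xh; rewrite (lay_tr _ t0) yh ?eqxx.
Qed.

Lemma occ_succ_layer pi h x' : (1 <= h < hor M)%N ->
  occ M pi h.+1 x' =
  \sum_(x | lay M x == h) occ M pi h x * \sum_a pi x a * tr M x a x'.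
Proof.
case/andP=> h1 hH; rewrite occS // /occ_step (bigID (fun x => lay M x == h)) /=.
rewrite [X in _ + X]big1 ?addr0 => [|x xh]; last first.
  by rewrite big1 // => a _; rewrite occ_eq0 ?mul0r // h1 (ltnW hH).
by apply: eq_bigr => x _; rewrite big_distrr /=; apply: eq_bigr => a _; rewrite mulrA.
Qed.

Lemma occ_ge0 pi h x : (forall y a, 0 <= pi y a) -> (1 <= h <= hor M)%N ->
  0 <= occ M pi h x.
Proof.
move=> pi_ge0; elim: h x => [//|[|h] IH] x /andP[_ hH]; first exact: init_ge0.
rewrite occ_succ_layer ?hH //; apply: sumr_ge0 => y /eqP yh.
apply: mulr_ge0; first by rewrite IH // (ltnW hH).
by apply: sumr_ge0 => a _; rewrite mulr_ge0 // tr_ge0 // yh.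
Qed.

Lemma sum_occ_layer_full pi h : (1 <= h <= hor M)%N ->
  \sum_(x | lay M x == h) occ M pi h x = \sum_x occ M pi h x.
Proof.
move=> hb; rewrite [RHS](bigID (fun x => lay M x == h)) /=.
by rewrite [X in _ = _ + X]big1 ?addr0 // => x; apply: occ_eq0.
Qed.

Lemma sum_occ_layer pi h : is_policy pi -> (1 <= h <= hor M)%N ->
  \sum_(x | lay M x == h) occ M pi h x = 1.
Proof.
move=> pi_pol; elim: h => [//|[|h] IH] hb.
  by rewrite sum_occ_layer_full //; case: HL => _ _ [].
have hH : (1 <= h.+1 < hor M)%N by [].
rewrite sum_occ_layer_full // (eq_bigr _ (fun x' _ => occ_succ_layer pi x' hH)).
rewrite exchange_big /= -[RHS](IH (ltnW hb)); apply: eq_bigr => y /eqP yh.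
rewrite -big_distrr /= exchange_big /= -[RHS]mulr1; congr (_ * _).
rewrite -(proj2 (pi_pol y)); apply: eq_bigr => a _.
by rewrite -big_distrr /= sum_tr ?mulr1 // yh.
Qed.

End Layered.

Section ReplicatorStates.
Variables (R : realFieldType) (S A : finType) (M : mdp R S A) (K : nat).
Hypothesis HK : (0 < K)%N.

(* The state (x, j+1); it defaults to (x, 1) when (x, j+1) is not a state. *)
Definition rep_st (j : nat) (x : S) : RS M K :=
  insubd (Sub (x, Ordinal HK) (orbT _)) (x, insubd (Ordinal HK) j).

Lemma rx_rep_st j x : rx (rep_st j x) = x.
Proof. by rewrite /rx /rep_st val_insubd; case: ifP. Qed.

Lemma rk_rep_st j x : (j < K)%N -> (lay M x < hor M)%N || (j == 0)%N ->
  rk (rep_st j x) = j.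
Proof.
move=> jK xj; have ojK : nat_of_ord (insubd (Ordinal HK) j) = j by rewrite val_insubd jK.
by rewrite /rk /rep_st val_insubd /= ojK xj.
Qed.

Lemma rk_lt (p : RS M K) : (rk p < K)%N.
Proof. exact: ltn_ord. Qed.

Lemma rep_st_valid (p : RS M K) : (lay M (rx p) < hor M)%N || (rk p == 0)%N.
Proof. by case: p. Qed.

Lemma rep_st_rx (p : RS M K) : rep_st (rk p) (rx p) = p.
Proof.
by case: p => [[x k] v]; apply: val_inj; rewrite /rep_st /rk /rx /= valKd val_insubd v.
Qed.

Lemma sum_rk_eq j (P : pred S) (F : RS M K -> R) : (j < K)%N ->
  (forall x, P x -> (lay M x < hor M)%N || (j == 0)%N) ->
  \sum_(p | (rk p == j) && P (rx p)) F p = \sum_(x | P x) F (rep_st j x).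
Proof.
move=> jK Pj; rewrite (reindex_onto (rep_st j) (@rx _ _ _ M K)) => [|p /andP[/eqP <- _]].
  apply: eq_bigl => x; rewrite rx_rep_st eqxx andbT.
  by case Px: (P x); rewrite ?andbF // andbT rk_rep_st ?Pj ?eqxx.
exact: rep_st_rx.
Qed.

Lemma sum_rk_eq0 (F : RS M K -> R) :
  \sum_(p | rk p == 0%N) F p = \sum_x F (rep_st 0 x).
Proof.
rewrite (eq_bigl (fun p => (rk p == 0%N) && xpredT (rx p))) => [|p]; last first.
  by rewrite andbT.
by rewrite (@sum_rk_eq 0%N xpredT) // => x _; rewrite orbT.
Qed.

End ReplicatorStates.

Section ReplicatorTransitions.
Variables (R : realFieldType) (S A : finType) (M : mdp R S A) (K : nat).
Variables (pe : S -> A) (pb : S -> A -> R).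
Hypothesis HK : (0 < K)%N.

Local Notation rep_st := (rep_st M HK).

Lemma sum_rep_tr_last (p : RS M K) a (g : RS M K -> R) :
  (rk p).+1 = K -> (lay M (rx p) < hor M)%N ->
  \sum_p' rep_tr pe pb p a p' * g p' = \sum_x' tr M (rx p) a x' * g (rep_st 0 x').
Proof.
move=> pK pH; rewrite /rep_tr /= pH pK ltnn big_if_mull sum_rk_eq0.
by apply: eq_bigr => x _; rewrite rx_rep_st.
Qed.

Lemma sum_rep_tr_mid (p : RS M K) a (g : RS M K -> R) :
  ((rk p).+1 < K)%N -> (lay M (rx p) < hor M)%N ->
  \sum_p' rep_tr pe pb p a p' * g p' =
  \sum_(x' | lay M x' == lay M (rx p))
     (if a == pe (rx p) then (x' == rx p)%:R else occ M pb (lay M (rx p)) x') *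
     g (rep_st (rk p).+1 x').
Proof.
move=> pK pH; rewrite /rep_tr /= pH pK big_if_mull.
rewrite (@sum_rk_eq _ _ _ M K HK _ (fun y => lay M y == lay M (rx p))) // => [|x /eqP ->].
  by apply: eq_bigr => x _; rewrite rx_rep_st.
by rewrite pH.
Qed.

End ReplicatorTransitions.

Section ReplicatorQ.
Variables (R : realFieldType) (S A : finType) (M : mdp R S A) (K : nat).
Variables (pe : S -> A) (pb : S -> A -> R).
Hypothesis HL : is_layered_mdp M.
Hypothesis HK : (0 < K)%N.

Local Notation Mt := (rep_mdp M K pe pb).
Local Notation pet := (det_pol (rep_pe M K pe)).
Local Notation Qe := (Qfun M (det_pol pe)).
Local Notation rep_st := (rep_st M HK).

Definition rep_Qfun (p : RS M K) (a : A) : R :=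
  let x := rx p in let h := lay M x in
  if (h < hor M)%N then
    (if (rk p).+1 == K then Qe h x a
     else if a == pe x then Qe h x (pe x)
     else \sum_(x' | lay M x' == h) occ M pb h x' * Qe h x' (pe x'))
  else Qe (hor M) x a.

Lemma rep_Qfun_pe (p : RS M K) :
  rep_Qfun p (pe (rx p)) = Qe (lay M (rx p)) (rx p) (pe (rx p)).
Proof.
rewrite /rep_Qfun; case: ifP => [_|xH]; first by case: ifP; rewrite ?eqxx.
have /andP[_ xH'] := lay_bounds HL (rx p).
by have -> : lay M (rx p) = hor M by apply/eqP; rewrite eqn_leq xH' leqNgt xH.
Qed.

Lemma Qrec_rep n (p : RS M K) a :
  (hor Mt - rep_lay p)%N = n -> Qrec Mt pet n p a = rep_Qfun p a.
Proof.
elim: n p a => [|n IH] p a; have /andP[x1 xH] := lay_bounds HL (rx p);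
  have kK := rk_lt p; have /orP v := rep_st_valid p; rewrite /= /rep_lay => pn.
  have xH' : lay M (rx p) = hor M by case: v; nia.
  by rewrite /rep_rew /rep_Qfun /= xH' eqxx orbT ltnn /Qfun subnn.
have pH : (lay M (rx p) < hor M)%N by case: v; nia.
under eq_bigr do rewrite sum_det_pol.
have [pK|pK] := eqVneq (rk p).+1 K.
  rewrite sum_rep_tr_last // /rep_rew /rep_Qfun /= pH pK !eqxx /= Qfun_succ //.
  congr (_ + _); apply: eq_bigr => x' _; rewrite sum_det_pol.
  have [->|t0] := eqVneq (tr M (rx p) a x') 0; first by rewrite !mul0r.
  have x'h := lay_tr HL pH t0.
  rewrite IH; last by rewrite /= /rep_lay rx_rep_st rk_rep_st ?x'h ?orbT //; nia.
  by rewrite /rep_pe rep_Qfun_pe rx_rep_st x'h.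
have pK' : ((rk p).+1 < K)%N by rewrite ltn_neqAle pK.
rewrite sum_rep_tr_mid // /rep_rew /rep_Qfun /= pH (negbTE pK) ltn_eqF //= add0r.
transitivity (\sum_(x' | lay M x' == lay M (rx p))
   (if a == pe (rx p) then (x' == rx p)%:R else occ M pb (lay M (rx p)) x') *
   Qe (lay M (rx p)) x' (pe x')).
  apply: eq_bigr => x' /eqP x'h.
  rewrite IH; last by rewrite /= /rep_lay rx_rep_st rk_rep_st ?x'h ?pH //; nia.
  by rewrite /rep_pe rep_Qfun_pe rx_rep_st x'h.
case: ifP => // _; rewrite (bigD1 (rx p)) //= eqxx mul1r big1 ?addr0 // => y.
by case/andP=> _ /negbTE ->; rewrite mul0r.
Qed.

Lemma value_rep : value Mt pet = value M (det_pol pe).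
Proof.
rewrite /value; under eq_bigr do rewrite sum_det_pol.
under [RHS]eq_bigr do rewrite sum_det_pol.
rewrite /= /rep_init big_if_mull sum_rk_eq0; apply: eq_bigr => x _.
rewrite rx_rep_st; have [->|init_x] := eqVneq (init M x) 0; first by rewrite !mul0r.
have x1 : lay M x = 1%N by apply/eqP; apply: contraNT init_x => /(init_eq0 HL)/eqP.
have x_lay : rep_lay (rep_st 0 x) = 1%N by rewrite /rep_lay rx_rep_st rk_rep_st ?x1 ?orbT.
rewrite /Qfun -[in (hor Mt - 1)%N]x_lay (Qrec_rep _ erefl).
by rewrite /rep_pe rep_Qfun_pe rx_rep_st x1.
Qed.

End ReplicatorQ.

Section ReplicatorOccupancy.
Variables (R : realFieldType) (S A : finType) (M : mdp R S A) (K : nat).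
Variables (pe : S -> A) (pb : S -> A -> R).
Hypothesis HL : is_layered_mdp M.
Hypothesis HK : (0 < K)%N.

Local Notation Mt := (rep_mdp M K pe pb).
Local Notation rep_st := (rep_st M HK).

(* The step from copy k to copy k+1 of layer h, with actions drawn from pi,
   fixes the distribution d on X_h. *)
Definition mix_invariant (pi : RS M K -> A -> R) (h k : nat) (d : S -> R) :=
  forall x', lay M x' = h ->
  \sum_(x | lay M x == h) d x *
     \sum_a pi (rep_st k x) a * (if a == pe x then (x' == x)%:R else occ M pb h x')
  = d x'.

Lemma mix_invariant_det h k d : mix_invariant (det_pol (rep_pe M K pe)) h k d.
Proof.
move=> x' x'h; under eq_bigr do rewrite sum_det_pol /rep_pe rx_rep_st eqxx.
rewrite (bigD1 x') ?x'h //= eqxx mulr1 big1 ?addr0 // => y /andP[_ yx'].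
by rewrite eq_sym (negbTE yx') mulr0.
Qed.

Lemma mix_invariant_rep_pb (po : S -> A) h k :
  is_policy pb -> (forall x, po x != pe x) -> (1 <= h < hor M)%N -> (k.+1 < K)%N ->
  mix_invariant (rep_pb M K pe pb po) h k (occ M pb h).
Proof.
move=> pb_pol po_pe /andP[h1 hH] kK x' x'h.
(* half of the mass stays, half is resampled from d_h^{pb} itself *)
transitivity (\sum_(x | lay M x == h) occ M pb h x *
    (2^-1 * (x' == x)%:R + 2^-1 * occ M pb h x')).
  apply: eq_bigr => x /eqP xh; congr (_ * _).
  rewrite /rep_pb rk_rep_st ?xh ?hH ?(ltnW kK) // (ltn_eqF kK) rx_rep_st.
  under eq_bigr do rewrite mulrDl -!mulrA.
  by rewrite big_split /= -!big_distrr /= !sum_det_pol eqxx (negbTE (po_pe x)).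
under eq_bigr do rewrite mulrDr.
rewrite big_split /= (bigD1 x') ?x'h //= eqxx mulr1 big1 ?addr0; last first.
  by move=> y /andP[_ yx']; rewrite eq_sym (negbTE yx') !mulr0.
under eq_bigr do rewrite mulrCA.
by rewrite -big_distrr /= -big_distrl /= sum_occ_layer ?h1 ?(ltnW hH) // mul1r; lra.
Qed.

Section Lifting.
Variables (pi : RS M K -> A -> R) (pi0 : S -> A -> R).
Hypothesis pi_last : forall p a, (rk p).+1 = K -> pi p a = pi0 (rx p) a.
Hypothesis pi_mix : forall h k, (1 <= h < hor M)%N -> (k.+1 < K)%N ->
  mix_invariant pi h k (occ M pi0 h).

Definition rep_occ (h k : nat) (p : RS M K) : R :=
  if (rk p == k) && (lay M (rx p) == h) then occ M pi0 h (rx p) else 0.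

Lemma occ_step_rep_occ h k p' : (k < K)%N -> (h < hor M)%N || (k == 0)%N ->
  occ_step Mt pi (rep_occ h k) p' =
  \sum_(x | lay M x == h) occ M pi0 h x *
     \sum_a pi (rep_st k x) a * rep_tr pe pb (rep_st k x) a p'.
Proof.
move=> kK hk; transitivity (\sum_q rep_occ h k q * \sum_a pi q a * rep_tr pe pb q a p').
  by apply: eq_bigr => q _; rewrite big_distrr /=; apply: eq_bigr => a _; rewrite mulrA.
rewrite big_if_mull (@sum_rk_eq _ _ _ M K HK _ (fun y => lay M y == h)) // => [|x /eqP ->//].
by apply: eq_bigr => x _; rewrite rx_rep_st.
Qed.

Lemma occ_step_mid h k : (1 <= h < hor M)%N -> (k.+1 < K)%N ->
  occ_step Mt pi (rep_occ h k) =1 rep_occ h k.+1.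
Proof.
move=> hb kK p'; have /andP[_ hH] := hb.
have rk_x x : lay M x == h -> rk (rep_st k x) = k.
  by move=> /eqP xh; rewrite rk_rep_st ?xh ?hH // ltnW.
have tr_x x a : lay M x == h -> rep_tr pe pb (rep_st k x) a p' =
    if (rk p' == k.+1) && (lay M (rx p') == h) then
      (if a == pe x then (rx p' == x)%:R else occ M pb h (rx p')) else 0.
  by move=> xh; rewrite /rep_tr /= rx_rep_st rk_x // (eqP xh) hH kK.
rewrite occ_step_rep_occ ?hH ?(ltnW kK) // /rep_occ; case: ifP => [/andP[/eqP pk /eqP p'h]|c].
  rewrite -(pi_mix hb kK p'h); apply: eq_bigr => x xh; congr (_ * _).
  by apply: eq_bigr => a _; rewrite tr_x // pk p'h !eqxx.
by rewrite big1 // => x xh; rewrite big1 ?mulr0 // => a _; rewrite tr_x // c mulr0.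
Qed.

Lemma occ_step_last h : (1 <= h < hor M)%N ->
  occ_step Mt pi (rep_occ h K.-1) =1 rep_occ h.+1 0.
Proof.
move=> hb p'; have /andP[h1 hH] := hb; have K1 : (K.-1 < K)%N by rewrite prednK.
have rk_x x : lay M x == h -> rk (rep_st K.-1 x) = K.-1.
  by move=> /eqP xh; rewrite rk_rep_st ?xh ?hH.
have tr_x x a : lay M x == h -> rep_tr pe pb (rep_st K.-1 x) a p' =
    if rk p' == 0%N then tr M x a (rx p') else 0.
  by move=> xh; rewrite /rep_tr /= rx_rep_st rk_x // prednK // ltnn (eqP xh) hH.
rewrite occ_step_rep_occ ?hH //.
transitivity (if rk p' == 0%N then occ M pi0 h.+1 (rx p') else 0).
  rewrite occ_succ_layer //; case: ifP => p'0; last first.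
    by rewrite big1 // => x xh; rewrite big1 ?mulr0 // => a _; rewrite tr_x // p'0 mulr0.
  apply: eq_bigr => x xh; congr (_ * _); apply: eq_bigr => a _.
  by rewrite pi_last ?rk_x ?prednK // rx_rep_st tr_x // p'0.
rewrite /rep_occ; case: eqP => //= _; case: eqP => // p'h.
by rewrite occ_eq0 //; apply/eqP.
Qed.

Lemma occ_rep_mid h k : (1 <= h < hor M)%N -> (k < K)%N ->
  occ Mt pi (h.-1 * K + 1) =1 rep_occ h 0 ->
  occ Mt pi (h.-1 * K + k + 1) =1 rep_occ h k.
Proof.
move=> hb + first; elim: k => [_|k IH kK]; first by rewrite addn0.
have -> : (h.-1 * K + k.+1 + 1 = (h.-1 * K + k + 1).+1)%N by lia.
move=> p; rewrite occS; last by rewrite addn1.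
by rewrite (eq_occ_step _ _ (IH (ltnW kK))) occ_step_mid.
Qed.

Lemma occ_rep_first h : (1 <= h <= hor M)%N -> occ Mt pi (h.-1 * K + 1) =1 rep_occ h 0.
Proof.
elim: h => [//|[_ _ p|h IH hb]].
  rewrite mul0n /occ /= /rep_init /rep_occ; case: eqP => //= _.
  by case: eqP => // /eqP; apply: init_eq0.
have hb' : (1 <= h.+1 < hor M)%N by [].
have -> : (h.+1 * K + 1 = (h.+1.-1 * K + K.-1 + 1).+1)%N by rewrite -subn1; nia.
move=> p; rewrite occS; last by rewrite addn1.
by rewrite (eq_occ_step _ _ (occ_rep_mid hb' _ (IH (ltnW hb)))) ?occ_step_last // prednK.
Qed.

Lemma occ_rep p : occ Mt pi (lay Mt p) p = occ M pi0 (lay M (rx p)) (rx p).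
Proof.
have xb := lay_bounds HL (rx p); rewrite /= /rep_lay.
case/orP: (rep_st_valid p) => [xH|/eqP k0].
  have hb : (1 <= lay M (rx p) < hor M)%N by case/andP: xb => -> _.
  by rewrite (occ_rep_mid hb (rk_lt p) (occ_rep_first xb)) /rep_occ !eqxx.
by rewrite k0 addn0 occ_rep_first // /rep_occ k0 !eqxx.
Qed.

End Lifting.

Lemma occ_rep_pe p :
  occ Mt (det_pol (rep_pe M K pe)) (lay Mt p) p = occ M (det_pol pe) (lay M (rx p)) (rx p).
Proof. by apply: occ_rep => // h k _ _; apply: mix_invariant_det. Qed.

Lemma occ_rep_pb (po : S -> A) p : is_policy pb -> (forall x, po x != pe x) ->
  occ Mt (rep_pb M K pe pb po) (lay Mt p) p = occ M pb (lay M (rx p)) (rx p).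
Proof.
move=> pb_pol po_pe; apply: occ_rep => [q a qK|h k hb kK].
  by rewrite /rep_pb qK eqxx.
exact: mix_invariant_rep_pb.
Qed.

End ReplicatorOccupancy.

Section ReplicatorConcentrability.
Variables (R : realFieldType) (S A : finType) (M : mdp R S A) (K : nat).
Variables (pe : S -> A) (pb : S -> A -> R) (po : S -> A).
Hypothesis HL : is_layered_mdp M.
Hypothesis HK : (0 < K)%N.
Hypothesis pb_pol : is_policy pb.
Hypothesis po_pe : forall x, po x != pe x.
Variable C : R.
Hypothesis HC : forall h x a, (1 <= h <= hor M)%N -> lay M x = h ->
  occSA M (det_pol pe) h x a <= C * occSA M pb h x a.

Local Notation Mt := (rep_mdp M K pe pb).

Lemma pb_ge0 x a : 0 <= pb x a.
Proof. by case: (pb_pol x). Qed.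

Lemma concentrability_ge0 : 0 <= C.
Proof.
rewrite leNgt; apply/negP => C0.
have h1 : (1 <= 1 <= hor M)%N by case: HL => ->.
have : 1 <= C * \sum_(x | lay M x == 1%N) occ M pb 1 x * pb x (pe x).
  rewrite -(sum_occ_layer HL (det_pol_policy R pe) h1) big_distrr /=.
  apply: ler_sum => x /eqP x1.
  by have := HC (pe x) h1 x1; rewrite /occSA /det_pol eqxx mulr1.
have : 0 <= \sum_(x | lay M x == 1%N) occ M pb 1 x * pb x (pe x).
  by apply: sumr_ge0 => x _; rewrite mulr_ge0 ?pb_ge0 ?occ_ge0 //; apply: pb_ge0.
nra.
Qed.

Lemma rep_concentrability p a :
  occSA Mt (det_pol (rep_pe M K pe)) (lay Mt p) p a <=
  2 * C * occSA Mt (rep_pb M K pe pb po) (lay Mt p) p a.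
Proof.
rewrite /occSA occ_rep_pe // occ_rep_pb //.
set x := rx p; set h := lay M x.
have C0 := concentrability_ge0.
have := HC a (lay_bounds HL x) (erefl h); rewrite /occSA => Hx.
have db0 : 0 <= occ M pb h x := occ_ge0 HL x pb_ge0 (lay_bounds HL x).
change (@det_pol R _ _ (rep_pe M K pe) p a) with (@det_pol R _ _ pe x a).
rewrite /rep_pb -/x; case: eqP => _.
  have : 0 <= C * (occ M pb h x * pb x a) by rewrite !mulr_ge0 ?pb_ge0.
  rewrite -mulrA; lra.
have pb1 : pb x (pe x) <= 1.
  by rewrite -(proj2 (pb_pol x)) (bigD1 (pe x)) //= lerDl sumr_ge0 // => b _; apply: pb_ge0.
have [ae|ane] := eqVneq a (pe x).
  rewrite ae /det_pol !eqxx eq_sym (negbTE (po_pe x)) in Hx *.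
  have : C * (occ M pb h x * pb x (pe x)) <= C * occ M pb h x.
    by rewrite ler_wpM2l // ler_piMr.
  lra.
have -> : det_pol pe x a = 0 :> R by rewrite /det_pol (negbTE ane).
rewrite !mulr0 add0r.
by rewrite !mulr_ge0 ?invr_ge0 ?ler0n // /det_pol; case: eqP.
Qed.

End ReplicatorConcentrability.

Unset Implicit Arguments. Set Strict Implicit.

Theorem mainTheorem13 (R : realFieldType) (S A : finType) (M : mdp R S A)
    (pe : S -> A) (pb : S -> A -> R) (po : S -> A) (K : nat) :
  (1 < #|A|)%N ->
  is_layered_mdp M ->
  is_policy pb ->
  (forall x, po x != pe x) ->
  (0 < K)%N ->
  let Mt := rep_mdp M K pe pb in
  let pet := det_pol (rep_pe M K pe) in
  let pbt := rep_pb M K pe pb po in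
  (forall C : R,
     (forall (h : nat) (x : S) (a : A), (1 <= h <= hor M)%N -> lay M x = h ->
        occSA M (det_pol pe) h x a <= C * occSA M pb h x a) ->
     (forall (l : nat) (p : RS M K) (a : A), (1 <= l <= hor Mt)%N -> lay Mt p = l ->
        occSA Mt pet l p a <= 2 * C * occSA Mt pbt l p a))
  /\
  (forall (p : RS M K) (a : A),
     let x := rx p in let h := lay M x in
     Qfun Mt pet (lay Mt p) p a =
       if (h < hor M)%N then
         (if (rk p).+1 == K then Qfun M (det_pol pe) h x a
          else if a == pe x then Qfun M (det_pol pe) h x (pe x)
          else \sum_(x' | lay M x' == h)
                 occ M pb h x' * Qfun M (det_pol pe) h x' (pe x'))
       else Qfun M (det_pol pe) (hor M) x a)
  /\
  value Mt pet = value M (det_pol pe).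
Proof.
(* |A| >= 2 only serves to make some po exist; here po is given. *)
move=> _ HL pb_pol po_pe HK Mt pet pbt; split; [|split].
- move=> C HC l p a _ <-; exact: (rep_concentrability HL HK pb_pol po_pe HC).
- by move=> p a; apply: Qrec_rep.
- exact: value_rep.
Qed.
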